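(* For $n\ge 1$ and all $k\ge 0$, $$P^+(n+1,k)=(n-2k)S(n,k),\qquad P^-(n+1,k)=(1+k)S(n,k).$$ Equivalently, $P_{n+1}^+(x)=nS_n(x)-2xS_n'(x)$ and $P_{n+1}^-(x)=S_n(x)+xS_n'(x)$.
   Context: For a permutation $\pi$ of $[n]=\{1,\dots,n\}$, ${\rm des}(\pi)=\#\{i\in[n-1]:\pi(i)>\pi(i+1)\}$. A double descent is an index $i\in[n-2]$ with $\pi(i)>\pi(i+1)>\pi(i+2)$; $\pi$ is simsun if for every $k\in[n]$ the subword of $\pi$ consisting of the letters in $[k]$ (in order of appearance) has no double descents. Let $\mathcal{RS}_n$ be the set of simsun permutations of $[n]$, $S(n,k)=\#\{\pi\in\mathcal{RS}_n:{\rm des}(\pi)=k\}$, $S_n(x)=\sum_kS(n,k)x^k$. Let $\mathcal{RS}_n^+=\{\pi\in\mathcal{RS}_n:\pi(1)>\pi(2)\}$ and $\mathcal{RS}_n^-=\{\pi\in\mathcal{RS}_n:\pi(1)<\pi(2)\}$. An interior peak of $\pi$ is an index $i\in\{2,\dots,n-1\}$ with $\pi(i-1)<\pi(i)>\pi(i+1)$, and ${\rm pk}(\pi)$ is their number. Let $P^{\pm}(n,k)=\#\{\pi\in\mathcal{RS}_n^{\pm}:{\rm pk}(\pi)=k\}$ and $P_n^{\pm}(x)=\sum_k P^{\pm}(n,k)x^k$. *)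

From mathcomp Require Import all_boot all_order all_fingroup all_algebra.
Set Implicit Arguments. Unset Strict Implicit. Unset Printing Implicit Defensive.

(* Permutations of [n] are modelled as {perm 'I_n}; the letter i+1 of the
   paper is the ordinal i (everything is shifted by one, which does not
   affect descents, peaks or the simsun property). *)

Definition word n (p : {perm 'I_n}) : seq nat := [seq val (p i) | i <- enum 'I_n].

Definition des_seq (s : seq nat) : nat :=
  \sum_(i < (size s).-1) (nth 0 s i > nth 0 s i.+1).

Definition has_ddes (s : seq nat) : bool :=
  [exists i : 'I_(size s).-2, (nth 0 s i > nth 0 s i.+1) && (nth 0 s i.+1 > nth 0 s i.+2)].

Definition pk_seq (s : seq nat) : nat :=
  \sum_(i < (size s).-2) ((nth 0 s i < nth 0 s i.+1) && (nth 0 s i.+1 > nth 0 s i.+2)).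

Definition des n (p : {perm 'I_n}) : nat := des_seq (word p).
Definition pk n (p : {perm 'I_n}) : nat := pk_seq (word p).

(* simsun: for every k in [n], the subword of letters in [k] has no double
   descents (letters in [k] are, after the shift, the values < k) *)
Definition simsun n (p : {perm 'I_n}) : bool :=
  [forall k : 'I_n, ~~ has_ddes [seq v <- word p | v < k.+1]].

Definition Snk (n k : nat) : nat := #|[set p : {perm 'I_n} | simsun p && (des p == k)]|.

Definition first_des n (p : {perm 'I_n}) : bool := nth 0 (word p) 0 > nth 0 (word p) 1.
Definition first_asc n (p : {perm 'I_n}) : bool := nth 0 (word p) 0 < nth 0 (word p) 1.

Definition Pplus (n k : nat) : nat :=
  #|[set p : {perm 'I_n} | [&& simsun p, first_des p & pk p == k]]|.
Definition Pminus (n k : nat) : nat :=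
  #|[set p : {perm 'I_n} | [&& simsun p, first_asc p & pk p == k]]|.

(* Deleting the largest letter of a simsun permutation of [n+1] leaves a simsun
   permutation of [n]; conversely the letter n+1 may be inserted into a simsun
   word exactly at the positions that create no double descent, and such an
   insertion raises des by 0 or 1.  For words without double descents
   pk = des - [the word starts with a descent].  Counting the admissible
   insertions into a simsun word of [n] by the resulting number of descents and
   by whether the result starts with a descent expresses P^+(n+1,k) and
   P^-(n+1,k) through the numbers of simsun words of [n] with a given number of
   descents and a given first step.  Those numbers are P^+(n,.) and P^-(n,.),
   so both formulas follow by induction on n. *)

From mathcomp Require Import all_boot all_order all_fingroup all_algebra.
From mathcomp Require Import zify.

Set Implicit Arguments.
Unset Strict Implicit.
Unset Printing Implicit Defensive.

Lemma des_seq_small s : size s <= 1 -> des_seq s = 0.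
Proof. by case: s => [|a [|b s]] //= _; rewrite /des_seq big_ord0. Qed.

Lemma des_seq_cons2 a b r : des_seq [:: a, b & r] = (b < a) + des_seq (b :: r).
Proof. by rewrite /des_seq /= big_ord_recl. Qed.

Lemma pk_seq_small s : size s <= 2 -> pk_seq s = 0.
Proof. by case: s => [|a [|b [|c s]]] //= _; rewrite /pk_seq big_ord0. Qed.

Lemma pk_seq_cons3 a b c r :
  pk_seq [:: a, b, c & r] = ((a < b) && (c < b)) + pk_seq [:: b, c & r].
Proof. by rewrite /pk_seq /= big_ord_recl. Qed.

Lemma has_ddes_small s : size s <= 2 -> has_ddes s = false.
Proof.
by case: s => [|a [|b [|c s]]] //= _; apply/existsP => -[[]].
Qed.

Lemma has_ddes_cons3 a b c r :
  has_ddes [:: a, b, c & r] = ((b < a) && (c < b)) || has_ddes [:: b, c & r].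
Proof.
apply/existsP/orP => [[[[|i] lti] /= ddi] | [ddi | /existsP[i ddi]]]; first by left.
- by right; apply/existsP; exists (Ordinal (lti : i < size r)).
- by exists ord0.
- by exists (lift ord0 i).
Qed.

Lemma has_ddes_behead a s : ~~ has_ddes (a :: s) -> ~~ has_ddes s.
Proof.
case: s => [|b [|c r]]; try by move=> _; rewrite has_ddes_small.
by rewrite has_ddes_cons3 negb_or => /andP[].
Qed.

Definition first_descent (s : seq nat) : bool :=
  if s is a :: b :: _ then b < a else false.

Lemma first_descent_behead a b r :
  ~~ has_ddes [:: a, b & r] -> b < a -> ~~ first_descent (b :: r).
Proof.
case: r => [|c r] //=; rewrite has_ddes_cons3 negb_or => /andP[+ _] ba.
by rewrite ba.
Qed.

Lemma pk_seq_add_first_descent s :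
  uniq s -> ~~ has_ddes s -> pk_seq s + first_descent s = des_seq s.
Proof.
elim: s => [|a [|b [|c r]] IH]; try by rewrite pk_seq_small ?des_seq_small.
  by rewrite pk_seq_small // des_seq_cons2 des_seq_small ?addn0.
rewrite pk_seq_cons3 des_seq_cons2 has_ddes_cons3 negb_or.
move=> /andP[+ uniq_bcr] /andP[ndd_abc ndd_bcr].
rewrite !inE negb_or => /andP[neq_ab _].
rewrite -(IH uniq_bcr ndd_bcr) /=.
by move: neq_ab ndd_abc; case: (ltngtP a b); case: (c < b) => //=; lia.
Qed.

Definition ins j (x : nat) t := take j t ++ x :: drop j t.

Lemma ins0 x t : ins 0 x t = x :: t.
Proof. by rewrite /ins take0 drop0. Qed.

Lemma insS j x a t : ins j.+1 x (a :: t) = a :: ins j x t.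
Proof. by []. Qed.

Lemma ins_nil j x : ins j x [::] = [:: x].
Proof. by case: j. Qed.

Lemma perm_ins j x t : perm_eq (ins j x t) (x :: t).
Proof.
by rewrite /ins -cat1s perm_catCA cat1s cat_take_drop.
Qed.

Lemma size_ins j x t : size (ins j x t) = (size t).+1.
Proof. by rewrite (perm_size (perm_ins j x t)). Qed.

Lemma index_ins j x t : x \notin t -> j <= size t -> index x (ins j x t) = j.
Proof.
elim: t j => [|a t IH] [|j] //=; rewrite ?ins0 /= ?eqxx //.
by rewrite inE negb_or eq_sym => /andP[/negbTE-> /IH] /[apply] ->.
Qed.

Lemma rem_ins j x t : x \notin t -> rem x (ins j x t) = t.
Proof.
elim: t j => [|a t IH] [|j] //=; rewrite ?ins0 /= ?eqxx //.
by rewrite inE negb_or eq_sym => /andP[/negbTE-> /IH ->].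
Qed.

Lemma ins_index_rem x s : x \in s -> ins (index x s) x (rem x s) = s.
Proof.
elim: s => [|a s IH] //=; rewrite inE eq_sym.
by case: eqP => [->|_] /= xs; rewrite ?ins0 // insS IH.
Qed.

Lemma eqn_indicator_split (v : bool) D d K : D = d \/ D = d.+1 ->
  (v && (D == K)) = (d == K) * (v && (D == d)) + (d.+1 == K) * (v && (D == d.+1)) :> nat.
Proof.
by case=> ->; case: v;
  rewrite /= ?eqxx ?(ltn_eqF (ltnSn d)) ?(gtn_eqF (ltnSn d)) ?muln0 ?muln1 ?addn0.
Qed.

Section InsertMax.
Variable x : nat.

Lemma des_seq_ins j t : all (gtn x) t ->
  des_seq (ins j x t) = des_seq t \/ des_seq (ins j x t) = (des_seq t).+1.
Proof.
elim: t j => [|a t IH] j; first by left; rewrite !des_seq_small ?size_ins.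
move=> /andP[/= ax xt]; case: j => [|j]; first by rewrite ins0 des_seq_cons2 ax; right.
rewrite insS; case: t IH xt => [|b r] IH xt.
  by rewrite des_seq_cons2 !des_seq_small // (leq_gtF (ltnW ax)); left.
case: j => [|j].
  rewrite ins0 !des_seq_cons2 (leq_gtF (ltnW ax)) /=.
  by case/andP: xt => -> _; case: (b < a); [left|right].
rewrite insS !des_seq_cons2.
by have [->|->] := IH j.+1 xt; [left|right]; rewrite ?addnS.
Qed.

Lemma has_ddes_cons_max b r : b < x -> ~~ has_ddes (b :: r) ->
  has_ddes [:: x, b & r] = first_descent (b :: r).
Proof.
case: r => [|c r] bx ndd; first by rewrite has_ddes_small.
by rewrite has_ddes_cons3 bx (negbTE ndd) orbF.
Qed.

Lemma has_ddes_cons2_ins j a b r : b < x -> ~~ has_ddes [:: a, b & r] ->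
  has_ddes [:: a, b & ins j x r] = has_ddes (b :: ins j x r).
Proof.
case: r => [|c r] bx ndd.
  by rewrite ins_nil has_ddes_cons3 (leq_gtF (ltnW bx)) andbF.
case: j => [|j]; first by rewrite ins0 has_ddes_cons3 (leq_gtF (ltnW bx)) andbF.
move: ndd; rewrite insS has_ddes_cons3 negb_or => /andP[+ _].
by rewrite has_ddes_cons3 => /negbTE->.
Qed.

Definition ins_tally (P : pred (seq nat)) (t : seq nat) : nat :=
  \sum_(j < (size t).+1) P (ins j x t).

Lemma ins_tally_cons P a t :
  ins_tally P (a :: t) = P (x :: a :: t) + ins_tally (fun s => P (a :: s)) t.
Proof. by rewrite /ins_tally big_ord_recl ins0. Qed.

Lemma eq_ins_tally P Q t : (forall j, P (ins j x t) = Q (ins j x t)) ->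
  ins_tally P t = ins_tally Q t.
Proof. by move=> PQ; apply: eq_bigr => j _; rewrite PQ. Qed.

Definition tail_ins_tally (e : nat) (u : seq nat) : nat :=
  if u is b :: r then
    ins_tally (fun s => ~~ has_ddes (b :: s) && (des_seq (b :: s) == des_seq u + e)) r
  else 0.

Lemma tail_ins_tally_cons e a b r : a < x -> b < x -> ~~ has_ddes [:: a, b & r] ->
  tail_ins_tally e [:: a, b & r] =
  (~~ first_descent (b :: r) && ((b < a) + e == 1)) + tail_ins_tally e (b :: r).
Proof.
move=> ax bx ndd; rewrite /tail_ins_tally ins_tally_cons; congr (_ + _).
  rewrite has_ddes_cons3 (leq_gtF (ltnW ax)) /=.
  rewrite (has_ddes_cons_max bx (has_ddes_behead ndd)) !des_seq_cons2.
  by rewrite (leq_gtF (ltnW ax)) bx add0n addnAC eqn_add2r eq_sym.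
apply: eq_ins_tally => j.
by rewrite has_ddes_cons2_ins // !des_seq_cons2 -addnA eqn_add2l.
Qed.

Lemma tail_ins_tally_eq b r : all (gtn x) (b :: r) -> ~~ has_ddes (b :: r) ->
  tail_ins_tally 0 (b :: r) = (des_seq (b :: r)).+1 /\
  tail_ins_tally 1 (b :: r) + ~~ first_descent (b :: r) + 2 * des_seq (b :: r) = size (b :: r).
Proof.
elim: r b => [|c r IH] b.
  move=> /andP[bx _] _; rewrite /tail_ins_tally /ins_tally !big_ord1 ins0.
  by rewrite has_ddes_small // !des_seq_cons2 !des_seq_small // (leq_gtF (ltnW bx)).
move=> /andP[bx xcr] ndd; have /andP[cx _] := xcr.
have [IH0 IH1] := IH c xcr (has_ddes_behead ndd).
rewrite !tail_ins_tally_cons // IH0 des_seq_cons2.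
have := @first_descent_behead b c r ndd.
move: IH1 => /=; case: (c < b); case: (first_descent (c :: r)) => //=; lia.
Qed.

Lemma ins_tally_cons2 (f : bool -> bool) K a b r : b < x -> ~~ has_ddes [:: a, b & r] ->
  all (gtn x) r ->
  ins_tally (fun s => [&& ~~ has_ddes (a :: b :: s), f (b < a)
                        & des_seq (a :: b :: s) == K]) r =
  f (b < a) * ((des_seq [:: a, b & r] == K) * tail_ins_tally 0 (b :: r)
             + ((des_seq [:: a, b & r]).+1 == K) * tail_ins_tally 1 (b :: r)).
Proof.
move=> bx ndd xr; rewrite /tail_ins_tally /ins_tally !big_distrr -big_split big_distrr.
apply: eq_bigr => j _.
rewrite has_ddes_cons2_ins // des_seq_cons2 addn0 (des_seq_cons2 a b r).
case: (f (b < a)) => /=; rewrite ?andbF ?mul0n // mul1n.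
rewrite (@eqn_indicator_split _ _ ((b < a) + des_seq (b :: r))).
  by rewrite -addnS !eqn_add2l addn1.
have := @des_seq_ins j.+1 (b :: r); rewrite insS /= bx => /(_ xr) [->|->].
  by left.
by right; rewrite addnS.
Qed.

(* The two counting lemmas below are stated additively: if [t] has d descents,
   the admissible insertions that add a descent and keep the first step of [t]
   number size t - 2d when [t] starts with a descent and size t - 2d - 1
   otherwise, which truncated subtraction cannot express. *)
Lemma ins_tally_first_descent k t : 1 < size t -> all (gtn x) t -> ~~ has_ddes t ->
  ins_tally (fun s => [&& ~~ has_ddes s, first_descent s & des_seq s == k.+1]) t
    + (first_descent t && (des_seq t == k)) * (2 * k)
  = (~~ first_descent t && (des_seq t == k))
    + (first_descent t && (des_seq t == k.+1)) * k.+1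
    + (first_descent t && (des_seq t == k)) * size t.
Proof.
case: t => [|a [|b r]] // _ /andP[ax xbr] ndd; have /andP[bx xr] := xbr.
rewrite /gtn /= in ax bx.
have [tail0 tail1] := tail_ins_tally_eq xbr (has_ddes_behead ndd).
rewrite !ins_tally_cons (@ins_tally_cons2 id) // tail0 /= has_ddes_cons_max //.
rewrite [des_seq (x :: _)]des_seq_cons2 ax.
have := first_descent_behead ndd.
move: tail1; rewrite des_seq_cons2 /=.
case: (b < a); case: (first_descent (b :: r)) => //= tail1 fd_tail;
  rewrite ?add0n ?add1n; repeat case: eqP => /= ?; lia.
Qed.

Lemma ins_tally_first_ascent K t : 1 < size t -> all (gtn x) t -> ~~ has_ddes t ->
  ins_tally (fun s => [&& ~~ has_ddes s, ~~ first_descent s & des_seq s == K]) t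
    + (~~ first_descent t && ((des_seq t).+1 == K)) * (2 * K).-1
  = (first_descent t && (des_seq t == K))
    + (~~ first_descent t && (des_seq t == K)) * K.+1
    + (~~ first_descent t && ((des_seq t).+1 == K)) * size t.
Proof.
case: t => [|a [|b r]] // _ /andP[ax xbr] ndd; have /andP[bx xr] := xbr.
rewrite /gtn /= in ax bx.
have [tail0 tail1] := tail_ins_tally_eq xbr (has_ddes_behead ndd).
rewrite !ins_tally_cons (@ins_tally_cons2 negb) // tail0 /= ax andbF add0n.
rewrite has_ddes_cons3 (leq_gtF (ltnW ax)) /= (has_ddes_cons_max bx (has_ddes_behead ndd)).
rewrite [des_seq (a :: _)]des_seq_cons2 [des_seq (x :: _)]des_seq_cons2 (leq_gtF (ltnW ax)) bx.
have := first_descent_behead ndd.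
move: tail1; rewrite des_seq_cons2 /=.
case: (b < a); case: (first_descent (b :: r)) => //= tail1 fd_tail;
  rewrite ?add0n ?add1n; repeat case: eqP => /= ?; lia.
Qed.

End InsertMax.

Lemma word_perm_eqP n s :
  reflect (exists p : {perm 'I_n}, s = word p) (perm_eq s (iota 0 n)).
Proof.
have -> : iota 0 n = [tuple val i | i < n] by rewrite /= -val_enum_ord.
by apply: (iffP tuple_permP) => -[p ->]; exists p;
  apply: eq_map => i; rewrite tnth_mktuple.
Qed.

Lemma word_inj n : injective (@word n).
Proof.
move=> p q /eq_in_map pq; apply/permP => i.
by apply: val_inj; apply: pq; rewrite mem_enum.
Qed.

Lemma perm_map_word_permutations n :
  perm_eq [seq word p | p <- index_enum {perm 'I_n}] (permutations (iota 0 n)).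
Proof.
apply: uniq_perm.
- by rewrite map_inj_uniq ?index_enum_uniq //; apply: word_inj.
- exact: permutations_uniq.
move=> s; rewrite mem_permutations; apply/mapP/word_perm_eqP.
  by case=> p _ ->; exists p.
by case=> p ->; exists p; rewrite ?mem_index_enum.
Qed.

Lemma card_word n (P : pred (seq nat)) :
  #|[set p : {perm 'I_n} | P (word p)]| = \sum_(s <- permutations (iota 0 n)) P s.
Proof.
rewrite -sum1dep_card big_mkcond -(perm_big _ (perm_map_word_permutations n)) big_map.
by apply: eq_bigr => p _; case: (P (word p)).
Qed.

Lemma perm_iotaS n : perm_eq (iota 0 n.+1) (n :: iota 0 n).
Proof. by rewrite -addn1 iotaD cats1 perm_rcons. Qed.

Section PermutationsIota.
Variables (n : nat) (s : seq nat).
Hypothesis s_perm : s \in permutations (iota 0 n).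

Lemma permutations_iota_uniq : uniq s.
Proof. by move: s_perm; rewrite mem_permutations => /perm_uniq ->; apply: iota_uniq. Qed.

Lemma permutations_iota_size : size s = n.
Proof. by move: s_perm; rewrite mem_permutations => /perm_size ->; rewrite size_iota. Qed.

Lemma permutations_iota_all : all (gtn n) s.
Proof.
move: s_perm; rewrite mem_permutations => /perm_all ->.
by apply/allP => i; rewrite mem_iota.
Qed.

Lemma permutations_iota_notin : n \notin s.
Proof. by apply/negP => /(allP permutations_iota_all); rewrite /= ltnn. Qed.

End PermutationsIota.

Lemma perm_permutations_iotaS n :
  perm_eq [seq ins j n t | t <- permutations (iota 0 n), j <- iota 0 n.+1]
          (permutations (iota 0 n.+1)).
Proof.
apply: uniq_perm => [||s].
- apply: allpairs_uniq; [exact: permutations_uniq | exact: iota_uniq |].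
  move=> [t1 j1] [t2 j2] /allpairsP[[u1 i1] [u1_perm i1_le [-> ->]]].
  move=> /allpairsP[[u2 i2] [u2_perm i2_le [-> ->]]] /= eq_ins.
  rewrite /= in u1_perm u2_perm.
  have n_u1 := permutations_iota_notin u1_perm.
  have n_u2 := permutations_iota_notin u2_perm.
  have i_le (u : seq nat) i : u \in permutations (iota 0 n) -> i \in iota 0 n.+1 ->
      i <= size u.
    by move=> u_perm; rewrite (permutations_iota_size u_perm) mem_iota add0n ltnS.
  suff [-> ->] : u1 = u2 /\ i1 = i2 by [].
  split; first by rewrite -(rem_ins i1 n_u1) eq_ins rem_ins.
  by rewrite -(index_ins n_u1 (i_le _ i1 u1_perm i1_le)) eq_ins index_ins ?(i_le _ i2).
- exact: permutations_uniq.
rewrite mem_permutations; apply/allpairsP/idP.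
  case=> -[t j] [t_perm _ ->]; rewrite (permPr (perm_iotaS n)).
  by rewrite (permPl (perm_ins j n t)) perm_cons -mem_permutations.
move=> s_perm; have n_s : n \in s by rewrite (perm_mem s_perm) mem_iota add0n ltnSn.
exists (rem n s, index n s); split; last by rewrite ins_index_rem.
  rewrite mem_permutations -(perm_cons n) -(permPr (perm_iotaS n)).
  by rewrite -(permPr s_perm) perm_sym perm_to_rem.
by rewrite mem_iota -(size_iota 0 n.+1) -(perm_size s_perm) index_mem.
Qed.

Lemma sum_permutations_iotaS n (P : pred (seq nat)) :
  \sum_(s <- permutations (iota 0 n.+1)) P s =
  \sum_(t <- permutations (iota 0 n)) ins_tally n P t.
Proof.
rewrite -(perm_big _ (perm_permutations_iotaS n)) big_allpairs_dep.
rewrite big_seq_cond [RHS]big_seq_cond; apply: eq_bigr => t /andP[t_perm _].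
rewrite /ins_tally (permutations_iota_size t_perm) -(subn0 n.+1) -/(index_iota 0 _).
by rewrite big_mkord.
Qed.

Definition simsun_word n (s : seq nat) : bool :=
  [forall k : 'I_n, ~~ has_ddes [seq v <- s | v < k.+1]].

Lemma simsun_word_ins n j t : all (gtn n) t ->
  simsun_word n.+1 (ins j n t) = simsun_word n t && ~~ has_ddes (ins j n t).
Proof.
move=> t_all; have ins_all : all (gtn n.+1) (ins j n t).
  rewrite (perm_all _ (perm_ins j n t)) /= ltnSn.
  by apply: sub_all t_all => v /= /ltnW.
have filter_ins k : k < n -> [seq v <- ins j n t | v < k.+1] = [seq v <- t | v < k.+1].
  by move=> lt_kn; rewrite /ins filter_cat /= ltnNge lt_kn /= -filter_cat cat_take_drop.
apply/forallP/andP => [ss | [/forallP ss ndd] k].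
  split; last by have := ss ord_max; rewrite (all_filterP ins_all).
  by apply/forallP => k; have := ss (widen_ord (leqnSn n) k); rewrite /= filter_ins.
have [lt_kn | ge_kn] := ltnP k n; first by rewrite filter_ins //; exact: (ss (Ordinal lt_kn)).
have -> : k.+1 = n.+1 by apply/eqP; rewrite eqSS eqn_leq ge_kn -ltnS ltn_ord.
by rewrite (all_filterP ins_all).
Qed.

Lemma simsun_word_has_ddes n s : all (gtn n) s -> simsun_word n s -> ~~ has_ddes s.
Proof.
case: n => [|n] s_all; first by case: s s_all => [_|//]; rewrite has_ddes_small.
move=> /forallP ss; have := ss ord_max.
by rewrite (all_filterP s_all).
Qed.

Lemma simsun_word_small n s : size s <= 2 -> simsun_word n s.
Proof.
move=> s_small; apply/forallP => k; rewrite has_ddes_small //.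
by rewrite size_filter (leq_trans (count_size _ _) s_small).
Qed.

Lemma ins_tally_simsun n (P : pred (seq nat)) t : all (gtn n) t ->
  ins_tally n (fun s => simsun_word n.+1 s && P s) t =
  simsun_word n t * ins_tally n (fun s => ~~ has_ddes s && P s) t.
Proof.
move=> t_all; rewrite /ins_tally big_distrr; apply: eq_bigr => j _.
by rewrite simsun_word_ins // -andbA; case: (simsun_word n t); rewrite /= ?mul1n.
Qed.

Definition descent_count n k := \sum_(s <- permutations (iota 0 n))
  [&& simsun_word n s, first_descent s & des_seq s == k].

Definition ascent_count n k := \sum_(s <- permutations (iota 0 n))
  [&& simsun_word n s, ~~ first_descent s & des_seq s == k].

Lemma Snk_descent_ascent n k : Snk n k = descent_count n k + ascent_count n k.
Proof.
rewrite /Snk (card_word n (fun s => simsun_word n s && (des_seq s == k))) -big_split.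
by apply: eq_bigr => s _; case: simsun_word; case: first_descent; rewrite /= ?addn0.
Qed.

Lemma first_descent_nth s : 1 < size s -> (nth 0 s 1 < nth 0 s 0) = first_descent s.
Proof. by case: s => [|a [|b s]]. Qed.

Lemma first_ascent_nth s : uniq s -> 1 < size s ->
  (nth 0 s 0 < nth 0 s 1) = ~~ first_descent s.
Proof.
case: s => [|a [|b s]] //= /andP[+ _] _; rewrite inE negb_or => /andP[neq_ab _].
by rewrite ltnNge leq_eqVlt eq_sym (negbTE neq_ab).
Qed.

Lemma Pplus_descent_count n k : 1 < n -> Pplus n k = descent_count n k.+1.
Proof.
move=> n_gt1; rewrite /Pplus (card_word n (fun s =>
  [&& simsun_word n s, nth 0 s 1 < nth 0 s 0 & pk_seq s == k])).
apply: eq_big_seq => s s_perm; rewrite first_descent_nth ?(permutations_iota_size s_perm) //.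
case ss: (simsun_word n s) => //=.
have ndd := simsun_word_has_ddes (permutations_iota_all s_perm) ss.
rewrite -(pk_seq_add_first_descent (permutations_iota_uniq s_perm) ndd).
by case: (first_descent s); rewrite ?addn1.
Qed.

Lemma Pminus_ascent_count n k : 1 < n -> Pminus n k = ascent_count n k.
Proof.
move=> n_gt1; rewrite /Pminus (card_word n (fun s =>
  [&& simsun_word n s, nth 0 s 0 < nth 0 s 1 & pk_seq s == k])).
apply: eq_big_seq => s s_perm.
rewrite first_ascent_nth ?(permutations_iota_size s_perm) ?(permutations_iota_uniq s_perm) //.
case ss: (simsun_word n s) => //=.
have ndd := simsun_word_has_ddes (permutations_iota_all s_perm) ss.
rewrite -(pk_seq_add_first_descent (permutations_iota_uniq s_perm) ndd).
by case: (first_descent s); rewrite ?addn0.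
Qed.

Lemma descent_count_rec n k : 1 < n ->
  descent_count n.+1 k.+1 + descent_count n k * (2 * k) =
  ascent_count n k + descent_count n k.+1 * k.+1 + descent_count n k * n.
Proof.
move=> n_gt1; rewrite /descent_count /ascent_count sum_permutations_iotaS.
rewrite !big_distrl -!big_split; apply: eq_big_seq => t t_perm /=.
have t_all := permutations_iota_all t_perm.
rewrite ins_tally_simsun //; case ss: (simsun_word n t) => //=; rewrite mul1n.
rewrite -{2}(permutations_iota_size t_perm) ins_tally_first_descent //.
  by rewrite (permutations_iota_size t_perm).
exact: simsun_word_has_ddes ss.
Qed.

Lemma ascent_count_rec n k : 1 < n ->
  ascent_count n.+1 k.+1 + ascent_count n k * (2 * k).+1 =
  descent_count n k.+1 + ascent_count n k.+1 * k.+2 + ascent_count n k * n.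
Proof.
move=> n_gt1; rewrite /descent_count /ascent_count sum_permutations_iotaS.
rewrite !big_distrl -!big_split; apply: eq_big_seq => t t_perm /=.
have t_all := permutations_iota_all t_perm.
rewrite ins_tally_simsun //; case ss: (simsun_word n t) => //=; rewrite mul1n.
rewrite -{2}(permutations_iota_size t_perm).
have := @ins_tally_first_ascent n k.+1 t; rewrite eqSS mulnS add2n.
apply=> //; first by rewrite (permutations_iota_size t_perm).
exact: simsun_word_has_ddes ss.
Qed.

Lemma ascent_count_rec0 n : 1 < n ->
  ascent_count n.+1 0 = descent_count n 0 + ascent_count n 0.
Proof.
move=> n_gt1; rewrite /descent_count /ascent_count sum_permutations_iotaS -big_split.
apply: eq_big_seq => t t_perm /=.
have t_all := permutations_iota_all t_perm.
rewrite ins_tally_simsun //; case ss: (simsun_word n t) => //=; rewrite mul1n.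
have := @ins_tally_first_ascent n 0 t; rewrite !andbF !mul0n !addn0 muln1.
apply=> //; first by rewrite (permutations_iota_size t_perm).
exact: simsun_word_has_ddes ss.
Qed.

Lemma simsun_peak_counts1 k :
  Pplus 2 k + 2 * k * Snk 1 k = 1 * Snk 1 k /\ Pminus 2 k = k.+1 * Snk 1 k.
Proof.
rewrite Pplus_descent_count // Pminus_ascent_count // Snk_descent_ascent.
rewrite /descent_count /ascent_count.
have -> : permutations (iota 0 2) = [:: [:: 0; 1]; [:: 1; 0]] by [].
have -> : permutations (iota 0 1) = [:: [:: 0]] by [].
rewrite !big_cons !big_nil !simsun_word_small // !des_seq_cons2 !des_seq_small //=.
by case: k => [|k]; rewrite ?muln0.
Qed.

Lemma simsun_peak_counts n k : 0 < n ->
  Pplus n.+1 k + 2 * k * Snk n k = n * Snk n k /\ Pminus n.+1 k = k.+1 * Snk n k.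
Proof.
elim: n k => [|[|n] IH] k // _; first exact: simsun_peak_counts1.
have ascent_eq j : ascent_count n.+2 j = j.+1 * Snk n.+1 j.
  by rewrite -Pminus_ascent_count //; case: (IH j isT).
have descent_eq j : descent_count n.+2 j.+1 + 2 * j * Snk n.+1 j = n.+1 * Snk n.+1 j.
  by rewrite -Pplus_descent_count //; case: (IH j isT).
rewrite Snk_descent_ascent Pplus_descent_count // Pminus_ascent_count //; split.
  have := descent_count_rec k (isT : 1 < n.+2).
  have := ascent_eq k; have := descent_eq k; nia.
case: k => [|k]; first by rewrite ascent_count_rec0 ?mul1n.
have := ascent_count_rec k (isT : 1 < n.+2).
have := ascent_eq k; have := descent_eq k; nia.
Qed.

Import GRing.Theory.
Local Open Scope ring_scope.

Theorem lemma5 (n k : nat) : (1 <= n)%N ->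
  (Pplus n.+1 k)%:Z = ((n%:Z - 2 * k%:Z) * (Snk n k)%:Z)%R /\
  (Pminus n.+1 k)%:Z = ((1 + k%:Z) * (Snk n k)%:Z)%R.
Proof.
move=> n_gt0; have [plus minus] := simsun_peak_counts k n_gt0; split.
  have := congr1 Posz plus; rewrite PoszD !PoszM => plus_int.
  by rewrite mulrBl -plus_int addrK.
by rewrite minus PoszM -add1n PoszD.
Qed.
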